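(* Let $(t^\ell)_{\ell\in\mathbb{N}}$ be a sequence of positive numbers with $t^\ell\to0$. Suppose that for each $\ell$, $x^\ell\in M_{t^\ell}$ is a Karush-Kuhn-Tucker point of $\mathrm{MPOC}_{t^\ell}$, and that $x^\ell\to\bar x$. If $\bar x\in M$ and LICQ holds at $\bar x$, then $\bar x$ is a T-stationary point of MPOC.
   Context: MPOC: minimize $f(x)$ subject to $x\in M=\{x\in\mathbb{R}^n \mid h_i(x)=0,\ i\in I;\ g_j(x)\ge 0,\ j\in J;\ F_{1,m}(x)F_{2,m}(x)=0,\ F_{2,m}(x)\ge 0,\ m=1,\dots,k\}$, all functions $C^2$, $I,J$ finite. For $t>0$, the Scholtes-type regularization $\mathrm{MPOC}_t$ is the nonlinear program: minimize $f(x)$ subject to $x\in M_t=\{x\mid h_i(x)=0\ (i\in I),\ g_j(x)\ge0\ (j\in J),\ -t\le F_{1,m}(x)F_{2,m}(x)\le t,\ F_{2,m}(x)\ge0\ (m=1,\dots,k)\}$; a KKT point is a feasible point satisfying the standard Karush-Kuhn-Tucker conditions for this smooth program (gradient of $f$ equals a combination of constraint gradients with nonnegative multipliers for inequality constraints and complementary slackness). Index sets at $\bar x\in M$: $J_0(\bar x)=\{j\mid g_j(\bar x)=0\}$, $a_{00}(\bar x)=\{m\mid F_{1,m}(\bar x)=0=F_{2,m}(\bar x)\}$, $a_{01}(\bar x)=\{m\mid F_{1,m}(\bar x)=0,F_{2,m}(\bar x)>0\}$, $a_{10}(\bar x)=\{m\mid F_{1,m}(\bar x)\ne0,F_{2,m}(\bar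 x)=0\}$. LICQ at $\bar x$: $Dh_i(\bar x)$ ($i\in I$), $Dg_j(\bar x)$ ($j\in J_0(\bar x)$), $DF_{1,m}(\bar x)$ ($m\in a_{01}\cup a_{00}$), $DF_{2,m}(\bar x)$ ($m\in a_{10}\cup a_{00}$) linearly independent. T-stationary point: $\bar x\in M$ with multipliers $\bar\lambda_i,\bar\mu_j$ ($j\in J_0(\bar x)$), $\bar\sigma_{1,m}$ ($m\in a_{01}$), $\bar\sigma_{2,m}$ ($m\in a_{10}$), $\bar\varrho_{1,m},\bar\varrho_{2,m}$ ($m\in a_{00}$) such that $Df(\bar x)=\sum_{I}\bar\lambda_iDh_i+\sum_{J_0}\bar\mu_jDg_j+\sum_{a_{01}}\bar\sigma_{1,m}DF_{1,m}+\sum_{a_{10}}\bar\sigma_{2,m}DF_{2,m}+\sum_{a_{00}}(\bar\varrho_{1,m}DF_{1,m}+\bar\varrho_{2,m}DF_{2,m})$ (at $\bar x$), $\bar\mu_j\ge0$, and $\bar\varrho_{1,m}=0$ or $\bar\varrho_{2,m}\le0$ for each $m\in a_{00}(\bar x)$. *)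

From HB Require Import structures.
From mathcomp Require Import all_boot all_order all_algebra.
From mathcomp Require Import all_classical all_reals all_analysis.
Set Implicit Arguments. Unset Strict Implicit. Unset Printing Implicit Defensive.
Import Order.TTheory GRing.Theory Num.Theory.
Import numFieldNormedType.Exports.
Local Open Scope ring_scope.
Local Open Scope classical_set_scope.

Section MPOC.
Variable R : realType.
Variable n : nat.

Definition ej (i : 'I_n) : 'rV[R]_n := delta_mx 0 i.

Definition pd (f : 'rV[R]_n -> R) (i : 'I_n) : 'rV[R]_n -> R :=
  fun x => derive f x (ej i).

Definition C1 (f : 'rV[R]_n -> R) : Prop :=
  forall i, (forall x, derivable f x (ej i)) /\ continuous (pd f i).

Definition C2 (f : 'rV[R]_n -> R) : Prop :=
  C1 f /\ forall i, C1 (pd f i).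

Definition grad (f : 'rV[R]_n -> R) (x : 'rV[R]_n) : 'rV[R]_n :=
  \row_i pd f i x.

Variables (p q k : nat).
Variables (f : 'rV[R]_n -> R) (h : 'I_p -> 'rV[R]_n -> R)
  (g : 'I_q -> 'rV[R]_n -> R) (F1 F2 : 'I_k -> 'rV[R]_n -> R).

Definition feasM (x : 'rV[R]_n) : Prop :=
  (forall i, h i x = 0) /\ (forall j, 0 <= g j x) /\
  (forall m, F1 m x * F2 m x = 0 /\ 0 <= F2 m x).

Definition feasMt (t : R) (x : 'rV[R]_n) : Prop :=
  (forall i, h i x = 0) /\ (forall j, 0 <= g j x) /\
  (forall m, - t <= F1 m x * F2 m x /\ F1 m x * F2 m x <= t /\ 0 <= F2 m x).

(* KKT point of the smooth program MPOC_t, whose inequality constraints are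
   g_j >= 0, t - F1 F2 >= 0, F1 F2 + t >= 0, F2 >= 0 *)
Definition KKT_t (t : R) (x : 'rV[R]_n) : Prop :=
  feasMt t x /\
  exists (lam : 'I_p -> R) (mu : 'I_q -> R) (al be ga : 'I_k -> R),
    (forall j, 0 <= mu j /\ mu j * g j x = 0) /\
    (forall m, 0 <= al m /\ al m * (t - F1 m x * F2 m x) = 0) /\
    (forall m, 0 <= be m /\ be m * (F1 m x * F2 m x + t) = 0) /\
    (forall m, 0 <= ga m /\ ga m * F2 m x = 0) /\
    grad f x =
      \sum_(i < p) lam i *: grad (h i) x
    + \sum_(j < q) mu j *: grad (g j) x
    + \sum_(m < k) (al m *: grad (fun y => t - F1 m y * F2 m y) x
                    + be m *: grad (fun y => F1 m y * F2 m y + t) x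
                    + ga m *: grad (F2 m) x).

Definition J0 (x : 'rV[R]_n) (j : 'I_q) : bool := g j x == 0.
Definition a00 (x : 'rV[R]_n) (m : 'I_k) : bool := (F1 m x == 0) && (F2 m x == 0).
Definition a01 (x : 'rV[R]_n) (m : 'I_k) : bool := (F1 m x == 0) && (0 < F2 m x).
Definition a10 (x : 'rV[R]_n) (m : 'I_k) : bool := (F1 m x != 0) && (F2 m x == 0).

Definition LICQ (x : 'rV[R]_n) : Prop :=
  free ([seq grad (h i) x | i <- enum 'I_p]
     ++ [seq grad (g j) x | j <- enum 'I_q & J0 x j]
     ++ [seq grad (F1 m) x | m <- enum 'I_k & a01 x m || a00 x m]
     ++ [seq grad (F2 m) x | m <- enum 'I_k & a10 x m || a00 x m]).

Definition Tstationary (x : 'rV[R]_n) : Prop :=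
  feasM x /\
  exists (lam : 'I_p -> R) (mu : 'I_q -> R) (s1 s2 r1 r2 : 'I_k -> R),
    grad f x =
      \sum_(i < p) lam i *: grad (h i) x
    + \sum_(j < q | J0 x j) mu j *: grad (g j) x
    + \sum_(m < k | a01 x m) s1 m *: grad (F1 m) x
    + \sum_(m < k | a10 x m) s2 m *: grad (F2 m) x
    + \sum_(m < k | a00 x m) (r1 m *: grad (F1 m) x + r2 m *: grad (F2 m) x)
    /\ (forall j, J0 x j -> 0 <= mu j)
    /\ (forall m, a00 x m -> r1 m = 0 \/ r2 m <= 0).

End MPOC.

From HB Require Import structures.
From mathcomp Require Import all_boot all_order all_algebra.
From mathcomp Require Import all_classical all_reals all_analysis.
From mathcomp Require Import ring lra.
Import Order.TTheory GRing.Theory Num.Theory.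
Import numFieldNormedType.Exports.
Local Open Scope ring_scope.
Local Open Scope classical_set_scope.

(* Rewrite the KKT equation of MPOC_t at x^l by merging, for each product
   constraint, its three multiplier terms into nu F2 DF1 + (nu F1 + gamma) DF2
   with nu = beta - alpha, and by absorbing the gradient that is not active at
   xbar (DF2 on a01, DF1 on a10) into the active one.  Near xbar the multipliers
   of inactive inequalities vanish, so Df(x^l) is a combination of vectors
   converging to the active gradients at xbar; these are linearly independent
   by LICQ, hence the coefficients converge, and their limits are T-stationarity
   multipliers.  mu >= 0 survives the limit; on a00, if the limit of nu F2 is
   nonzero then eventually F2(x^l) > 0, gamma = 0, and complementarity for
   -t <= F1 F2 <= t gives nu F1 F2 <= 0, i.e. nu F1 <= 0. *)

Section matrix_limits.
Context {R : realType} {T : Type} {F : set_system T} {FF : Filter F}.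

Lemma cvg_sum (V : normedModType R) (I : Type) (r : seq I) (P : pred I)
    (u : I -> T -> V) (a : I -> V) :
  (forall i, P i -> u i @ F --> a i) ->
  (fun x => \sum_(i <- r | P i) u i x) @ F --> \sum_(i <- r | P i) a i.
Proof. by move=> ua; exact: (cvg_big (@add_continuous V) _ ua). Qed.

Lemma cvg_prod (I : Type) (r : seq I) (P : pred I) (u : I -> T -> R) (a : I -> R) :
  (forall i, P i -> u i @ F --> a i) ->
  (fun x => \prod_(i <- r | P i) u i x) @ F --> \prod_(i <- r | P i) a i.
Proof. by move=> ua; exact: (cvg_big (@mul_continuous R) _ ua). Qed.

Lemma cvg_mxP {m n} (A : T -> 'M[R]_(m, n)) (A0 : 'M[R]_(m, n)) :
  A @ F --> A0 <-> forall i j, (fun x => A x i j) @ F --> A0 i j.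
Proof.
split=> [AA0 i j|AA0].
  apply: (@continuous_cvg _ _ _ F _ A (fun M => M i j) A0 _ AA0).
  exact: coord_continuous.
apply/cvgrPdist_le => e e0.
have : \forall x \near F, forall ij : 'I_m * 'I_n, `|A0 ij.1 ij.2 - A x ij.1 ij.2| <= e.
  by apply: filter_forall => -[i j]; exact: (cvgrPdist_le _ _).1 (AA0 i j) e e0.
apply: filterS => x Hx.
rewrite [leLHS]/Num.Def.normr /= mx_normrE; apply: bigmax_le => [|ij _]; first exact: ltW.
by rewrite !mxE; exact: Hx.
Qed.

Lemma cvg_mulmx {m N n} {A : T -> 'M[R]_(m, N)} {B : T -> 'M[R]_(N, n)}
    {A0 : 'M[R]_(m, N)} {B0 : 'M[R]_(N, n)} :
  A @ F --> A0 -> B @ F --> B0 -> (fun x => A x *m B x) @ F --> A0 *m B0.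
Proof.
move=> /cvg_mxP AA0 /cvg_mxP BB0; apply/cvg_mxP => i j; rewrite mxE.
under eq_fun do rewrite mxE.
by apply: cvg_sum => l _; apply: cvgM.
Qed.

Lemma cvg_det {N} {A : T -> 'M[R]_N} {A0 : 'M[R]_N} :
  A @ F --> A0 -> (fun x => \det (A x)) @ F --> \det A0.
Proof.
move=> /cvg_mxP AA0; apply: cvg_sum => s _; apply: cvgM; first exact: cvg_cst.
by apply: cvg_prod => i _; exact: AA0.
Qed.

Lemma cvg_adj {N} {A : T -> 'M[R]_N} {A0 : 'M[R]_N} :
  A @ F --> A0 -> (fun x => \adj (A x)) @ F --> \adj A0.
Proof.
move=> /cvg_mxP AA0; apply/cvg_mxP => i j; rewrite mxE /cofactor.
under eq_fun do rewrite mxE /cofactor.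
apply: cvgM; first exact: cvg_cst.
apply: cvg_det; apply/cvg_mxP => a b; rewrite !mxE.
by under eq_fun do rewrite !mxE; exact: AA0.
Qed.

Lemma cvg_invmx {N} {A : T -> 'M[R]_N} {A0 : 'M[R]_N} :
  A0 \in unitmx -> A @ F --> A0 -> (fun x => invmx (A x)) @ F --> invmx A0.
Proof.
move=> A0u AA0; have detA := cvg_det AA0.
have detA0 : \det A0 != 0 by rewrite -unitfE -unitmxE.
rewrite {2}/invmx A0u.
apply: cvg_trans (cvgZ (cvgV detA0 detA) (cvg_adj AA0)).
apply: near_eq_cvg; near=> x.
have Au : A x \in unitmx.
  by rewrite unitmxE unitfE; near: x; exact: cvgr_neq0 _ detA detA0.
by rewrite /invmx Au.
Unshelve. all: by end_near.
Qed.

End matrix_limits.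

Section row_free_limits.
Context {R : realType} {T : Type} {F : set_system T} {FF : ProperFilter F}.

Lemma cvg_row_free_coords {N n} {A : T -> 'M[R]_(N, n)} {A0 : 'M[R]_(N, n)}
    {b : T -> 'rV[R]_n} {b0 : 'rV[R]_n} {c : T -> 'rV[R]_N} :
  row_free A0 -> A @ F --> A0 -> b @ F --> b0 ->
  (\forall x \near F, b x = c x *m A x) ->
  exists2 c0 : 'rV[R]_N, c @ F --> c0 & b0 = c0 *m A0.
Proof.
move=> /row_freeP[B A0B] AA0 bb0 bcA.
have AB1 : (fun x => A x *m B) @ F --> (1%:M : 'M[R]_N).
  by rewrite -A0B; apply: cvg_mulmx => //; exact: cvg_cst.
have ABu : \forall x \near F, A x *m B \in unitmx.
  have detAB : \det (A x *m B) @[x --> F] --> (1 : R) by rewrite -(det1 R N); exact: cvg_det.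
  by apply: filterS (cvgr_neq0 _ detAB (oner_neq0 R)) => x; rewrite unitmxE unitfE.
have cc0 : c @ F --> b0 *m B.
  rewrite -[X in _ --> X]mulmx1 -[X in _ *m X](invmx1 R N).
  apply: cvg_trans (cvg_mulmx (cvg_mulmx bb0 (cvg_cst B)) (cvg_invmx (unitmx1 _ _) AB1)).
  apply: near_eq_cvg; near=> x.
  have /= Ex : b x = c x *m A x by near: x.
  by rewrite Ex -(mulmxA (c x)) mulmxK //; near: x.
exists (b0 *m B) => //.
have bA0 : b @ F --> b0 *m B *m A0.
  apply: cvg_trans (cvg_mulmx cc0 AA0).
  by apply: near_eq_cvg; apply: filterS bcA => x ->.
exact: cvg_unique _ bb0 bA0.
Unshelve. all: by end_near.
Qed.

End row_free_limits.

Lemma cvgr0_norm_dom {R : realType} {T : Type} {F : set_system T} {FF : Filter F}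
    {u v : T -> R} :
  (forall x, `|u x| <= `|v x|) -> v @ F --> 0 -> u @ F --> 0.
Proof.
move=> uv /cvgr0Pnorm_le v0; apply/cvgr0Pnorm_le => e e0.
by apply: filterS (v0 e e0) => x; exact: le_trans.
Qed.

Section C1_continuity.
Context {R : realType} {n : nat}.
Implicit Types (f : 'rV[R]_n -> R) (x y v : 'rV[R]_n).

Lemma is_derive_line f y v r :
  derivable f (y + r *: v) v ->
  is_derive r 1 (fun s => f (y + s *: v)) ('D_v f (y + r *: v)).
Proof.
move=> df.
have E : (fun h : R => h^-1 *: (((fun s => f (y + s *: v)) \o shift r) (h *: 1)
                                  - f (y + r *: v)))
       = (fun h => h^-1 *: ((f \o shift (y + r *: v)) (h *: v) - f (y + r *: v))).
  by apply/funext => h /=; rewrite [h *: 1]mulr1 scalerDl addrCA addrC.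
by apply: DeriveDef; [rewrite /derivable E | rewrite /derive E].
Qed.

Lemma MVT_coord f (i : 'I_n) y s :
  (forall x, derivable f x (ej R i)) ->
  exists c, `|c| <= `|s| /\ f (y + s *: ej R i) - f y = s * pd f i (y + c *: ej R i).
Proof.
move=> df; pose phi s := f (y + s *: ej R i).
have dphi (r : R) : is_derive r (1 : R) phi (pd f i (y + r *: ej R i)) by exact: is_derive_line.
have cphi a b : {within `[a, b], continuous phi}.
  by apply: derivable_within_continuous => r _; have [] := dphi r.
have [s0|s0] := leP 0 s.
  have [c cin E] := MVT_segment s0 (fun r _ => dphi r) (cphi 0 s).
  exists c; split.
    move: cin; rewrite in_itv /= => /andP[c0 cs].
    by rewrite !ger0_norm // (le_trans c0 cs).
  by move: E; rewrite /phi scale0r addr0 subr0 mulrC.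
have [c cin E] := MVT_segment (ltW s0) (fun r _ => dphi r) (cphi s 0).
exists c; split.
  move: cin; rewrite in_itv /= => /andP[sc c0].
  by rewrite !ler0_norm ?lerN2 // ltW.
move: E; rewrite /phi scale0r addr0 sub0r mulrN => E.
by rewrite -opprB E opprK mulrC.
Qed.

Definition stair x y (j : nat) : 'rV[R]_n := \row_i (if (i < j)%N then y 0 i else x 0 i).

Lemma stair0 x y : stair x y 0 = x.
Proof. by apply/rowP => i; rewrite mxE. Qed.

Lemma stairn x y : stair x y n = y.
Proof. by apply/rowP => i; rewrite mxE ltn_ord. Qed.

Lemma stairS x y (i : 'I_n) :
  stair x y i.+1 = stair x y i + (y 0 i - x 0 i) *: ej R i.
Proof.
apply/rowP => j; rewrite !mxE eqxx /= ltnS.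
case: (ltngtP j i) => [ji|ij|/val_inj ->]; last by rewrite eqxx mulr1 addrC subrK.
- by rewrite (_ : (j == i) = false) ?mulr0 ?addr0 // -val_eqE /= ltn_eqF.
- by rewrite (_ : (j == i) = false) ?mulr0 ?addr0 // -val_eqE /= gtn_eqF.
Qed.

Lemma MVT_stair f x y :
  (forall i x, derivable f x (ej R i)) ->
  exists c : 'I_n -> R, (forall i, `|c i| <= `|y 0 i - x 0 i|) /\
    f y - f x = \sum_i (y 0 i - x 0 i) * pd f i (stair x y i + c i *: ej R i).
Proof.
move=> df.
have /choice[c Hc] := fun i : 'I_n => MVT_coord _ _ (stair x y i) (y 0 i - x 0 i) (df i).
exists c; split=> [i|]; first by have [] := Hc i.
rewrite -{1}(stairn x y) -{2}(stair0 x y).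
rewrite -(telescope_sumr (fun j => f (stair x y j)) (leq0n n)) big_mkord.
by apply: eq_bigr => i _; rewrite stairS; have [] := Hc i.
Qed.

Lemma C1_cvg {f} {T : Type} {F : set_system T} {FF : Filter F} {y : T -> 'rV[R]_n} {x} :
  C1 f -> y @ F --> x -> (fun t => f (y t)) @ F --> f x.
Proof.
move=> Cf yx; have coord j : (fun t => y t 0 j) @ F --> x 0 j by move/cvg_mxP: yx; apply.
have /choice[c Hc] := fun t => MVT_stair _ x (y t) (fun i => (Cf i).1).
have dx i : (fun t => y t 0 i - x 0 i) @ F --> 0.
  by rewrite -(subrr (x 0 i)); apply: cvgB (coord i) (cvg_cst _).
have stair_x (i : 'I_n) : stair x (y t) i + c t i *: ej R i @[t --> F] --> x.
  rewrite -[X in _ --> X]addr0 -(scale0r (ej R i)).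
  apply: cvgD; last first.
    by apply: cvgZ (cvg_cst _); exact: cvgr0_norm_dom (fun t => (Hc t).1 i) (dx i).
  apply/cvg_mxP => a j; rewrite (ord1 a); under eq_fun do rewrite mxE.
  by case: (j < i)%N; [exact: coord | exact: cvg_cst].
have -> : (fun t => f (y t)) =
    fun t => f x + \sum_i (y t 0 i - x 0 i) * pd f i (stair x (y t) i + c t i *: ej R i).
  by apply/funext => t; have [_ <-] := Hc t; rewrite addrC subrK.
have sum0 : \sum_(i < n) 0 * pd f i x = 0 by rewrite big1 // => i _; rewrite mul0r.
rewrite -[X in _ --> X]addr0 -[X in _ + X]sum0.
apply: cvgD; first exact: cvg_cst.
apply: cvg_sum => i _; exact: cvgM (dx i) (continuous_cvg _ ((Cf i).2 x) (stair_x i)).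
Qed.

End C1_continuity.

Section free_limits.
Context {R : realType} {n : nat} {I : eqType} {T : Type} {F : set_system T}
  {FF : ProperFilter F}.

Lemma cvg_free_combination {s : seq I} {v : T -> I -> 'rV[R]_n} {v0 : I -> 'rV[R]_n}
    {a : T -> I -> R} {b : T -> 'rV[R]_n} {b0 : 'rV[R]_n} :
  free (map v0 s) -> (forall i, v ^~ i @ F --> v0 i) -> b @ F --> b0 ->
  (\forall x \near F, b x = \sum_(i <- s) a x i *: v x i) ->
  (forall i, i \in s -> a ^~ i @ F --> lim (a ^~ i @ F)) /\
  b0 = \sum_(i <- s) lim (a ^~ i @ F) *: v0 i.
Proof.
move=> v0_free vv0 bb0 b_comb; pose st := in_tuple s.
pose A x := \matrix_(r < size s, j < n) v x (tnth st r) 0 j.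
pose A0 := \matrix_(r < size s, j < n) v0 (tnth st r) 0 j.
pose c x := \row_(r < size s) a x (tnth st r).
have mulmx_rows (w : 'rV[R]_(size s)) (M : 'M[R]_(size s, n)) (u : I -> 'rV[R]_n) :
    (forall r, row r M = u (tnth st r)) -> w *m M = \sum_r w 0 r *: u (tnth st r).
  by move=> Mu; rewrite mulmx_sum_row; apply: eq_bigr => r _; rewrite Mu.
have rowA0 r : row r A0 = v0 (tnth st r) by apply/rowP => j; rewrite !mxE.
have A0_free : row_free A0.
  apply/inj_row_free => w wA0; apply/rowP => r; rewrite mxE.
  have /freeP v0_free' := (v0_free : free (map_tuple v0 st)).
  apply: (v0_free' (fun r => w 0 r)); apply: etrans wA0; rewrite (mulmx_rows _ _ v0) //.
  by apply: eq_bigr => r' _; rewrite -(tnth_nth 0) tnth_map.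
have AA0 : A @ F --> A0.
  apply/cvg_mxP => r j; rewrite mxE; under eq_fun do rewrite mxE.
  by move/cvg_mxP: (vv0 (tnth st r)); apply.
have bcA : \forall x \near F, b x = c x *m A x.
  apply: filterS b_comb => x ->; rewrite (mulmx_rows _ _ (v x)) ?(big_tuple _ _ st).
    by apply: eq_bigr => r _; rewrite mxE.
  by move=> r; apply/rowP => j; rewrite !mxE.
have [c0 cc0 b0E] := cvg_row_free_coords A0_free AA0 bb0 bcA.
have a_cvg r : a ^~ (tnth st r) @ F --> c0 0 r.
  by move/cvg_mxP: cc0 => /(_ 0 r); under eq_fun do rewrite mxE.
have limE r : lim (a ^~ (tnth st r) @ F) = c0 0 r by exact: cvg_lim (a_cvg r).
split=> [i /(tnthP st)[r ->]|]; first by rewrite limE; exact: a_cvg.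
by rewrite b0E (mulmx_rows _ _ v0) // (big_tuple _ _ st); apply: eq_bigr => r _; rewrite limE.
Qed.

End free_limits.

Lemma cvg_div0 {R : realType} {T : Type} {F : set_system T} {FF : Filter F}
    (u w : T -> R) (w0 : R) :
  u @ F --> 0 -> w @ F --> w0 -> w0 != 0 -> (fun x => u x / w x) @ F --> 0.
Proof. by move=> u0 ww0 w00; rewrite -(mul0r w0^-1); apply: cvgM u0 (cvgV w00 ww0). Qed.

Section gradients.
Context {R : realType} {n : nat}.
Implicit Types (u v : 'rV[R]_n -> R) (x : 'rV[R]_n).

Lemma C1_cvg_grad {u} {T : Type} {F : set_system T} {FF : Filter F} {y : T -> 'rV[R]_n} {x} :
  C1 u -> y @ F --> x -> (fun t => grad u (y t)) @ F --> grad u x.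
Proof.
move=> Cu yx; apply/cvg_mxP => a i; rewrite mxE; under eq_fun do rewrite mxE.
exact: continuous_cvg _ ((Cu i).2 x) yx.
Qed.

Lemma grad_cst_subM u v (c : R) x : C1 u -> C1 v ->
  grad (fun y => c - u y * v y) x = - (u x *: grad v x + v x *: grad u x).
Proof.
move=> Cu Cv; apply/rowP => i; rewrite !mxE /pd.
have -> : (fun y => c - u y * v y) = cst c - u * v by apply/funext.
rewrite deriveB; last 2 first.
- exact: derivable_cst.
- by apply: derivableM; [exact: (Cu i).1 | exact: (Cv i).1].
by rewrite derive_cst sub0r deriveM //; [exact: (Cu i).1 | exact: (Cv i).1].
Qed.

Lemma grad_M_addcst u v (c : R) x : C1 u -> C1 v ->
  grad (fun y => u y * v y + c) x = u x *: grad v x + v x *: grad u x.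
Proof.
move=> Cu Cv; apply/rowP => i; rewrite !mxE /pd.
have -> : (fun y => u y * v y + c) = u * v + cst c by apply/funext.
rewrite deriveD; last 2 first.
- by apply: derivableM; [exact: (Cu i).1 | exact: (Cv i).1].
- exact: derivable_cst.
by rewrite derive_cst addr0 deriveM //; [exact: (Cu i).1 | exact: (Cv i).1].
Qed.

End gradients.

Section multiplier_algebra.
Variables (K : fieldType) (V : lmodType K).
Implicit Types (u v : V).

Lemma scale_product_grads (al be ga a b : K) u v :
  al *: - (a *: v + b *: u) + be *: (a *: v + b *: u) + ga *: v
  = ((be - al) * b) *: u + ((be - al) * a + ga) *: v.
Proof.
rewrite scalerN -scaleNr -scalerDl (addrC (- al)) scalerDr !scalerA scalerDl addrA.
by rewrite (addrC (_ *: v)).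
Qed.

Lemma combination_on_first (nu a b c : K) u v : b != 0 -> c * b = 0 ->
  (nu * b) *: u + (nu * a + c) *: v = (nu * b) *: (u + (a / b) *: v).
Proof.
move=> b0 /eqP; rewrite mulf_eq0 (negbTE b0) orbF => /eqP ->.
by rewrite addr0 scalerDr scalerA; congr (_ + _ *: v); field.
Qed.

Lemma combination_on_second (nu a b c : K) u v : a != 0 -> c * b = 0 ->
  (nu * b) *: u + (nu * a + c) *: v = (nu * a + c) *: (v + (b / a) *: u).
Proof.
move=> a0 cb0; rewrite scalerDr scalerA addrC; congr (_ + _ *: u).
by rewrite mulrDl [c * _]mulrA cb0 mul0r addr0; field.
Qed.

End multiplier_algebra.

Lemma complementarity_sign {R : realFieldType} (t al be P : R) :
  0 < t -> 0 <= al -> 0 <= be -> al * (t - P) = 0 -> be * (P + t) = 0 ->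
  (be - al) * P <= 0.
Proof. by move=> *; nra. Qed.

Section KKT_limit.
Variables (R : realType) (n p q k : nat).
Variables (f : 'rV[R]_n -> R) (h : 'I_p -> 'rV[R]_n -> R)
  (g : 'I_q -> 'rV[R]_n -> R) (F1 F2 : 'I_k -> 'rV[R]_n -> R).

Definition KKT_multipliers (t : R) (x : 'rV[R]_n) (lam : 'I_p -> R) (mu : 'I_q -> R)
    (al be ga : 'I_k -> R) : Prop :=
  (forall j, 0 <= mu j /\ mu j * g j x = 0) /\
  (forall m, 0 <= al m /\ al m * (t - F1 m x * F2 m x) = 0) /\
  (forall m, 0 <= be m /\ be m * (F1 m x * F2 m x + t) = 0) /\
  (forall m, 0 <= ga m /\ ga m * F2 m x = 0) /\
  grad f x =
      \sum_(i < p) lam i *: grad (h i) x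
    + \sum_(j < q) mu j *: grad (g j) x
    + \sum_(m < k) (al m *: grad (fun y => t - F1 m y * F2 m y) x
                    + be m *: grad (fun y => F1 m y * F2 m y + t) x
                    + ga m *: grad (F2 m) x).

Hypotheses (Cf : C1 f) (Ch : forall i, C1 (h i)) (Cg : forall j, C1 (g j))
  (CF1 : forall m, C1 (F1 m)) (CF2 : forall m, C1 (F2 m)).
Variables (t : nat -> R) (x : nat -> 'rV[R]_n) (xbar : 'rV[R]_n).
Variables (lam : nat -> 'I_p -> R) (mu : nat -> 'I_q -> R) (al be ga : nat -> 'I_k -> R).
Hypotheses (t_gt0 : forall l, 0 < t l) (feas_x : forall l, feasMt h g F1 F2 (t l) (x l))
  (mult : forall l, KKT_multipliers (t l) (x l) (lam l) (mu l) (al l) (be l) (ga l))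
  (x_cvg : x @ \oo --> xbar) (feas_xbar : feasM h g F1 F2 xbar).

Local Notation Idx := ('I_p + ('I_q + ('I_k + 'I_k)))%type.

Definition active : seq Idx :=
  [seq inl i | i <- enum 'I_p]
  ++ [seq inr (inl j) | j <- enum 'I_q & J0 g xbar j]
  ++ [seq inr (inr (inl m)) | m <- enum 'I_k & a01 F1 F2 xbar m || a00 F1 F2 xbar m]
  ++ [seq inr (inr (inr m)) | m <- enum 'I_k & a10 F1 F2 xbar m || a00 F1 F2 xbar m].

Definition active_grad (τ : Idx) : 'rV[R]_n :=
  match τ with
  | inl i => grad (h i) xbar
  | inr (inl j) => grad (g j) xbar
  | inr (inr (inl m)) => grad (F1 m) xbar
  | inr (inr (inr m)) => grad (F2 m) xbar
  end.

Definition nu l m := be l m - al l m.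

(* For m in a01 the term (nu F1 + ga) DF2 of the product constraint is absorbed
   into the DF1 slot, since DF2 is not active at xbar and ga = 0 once F2 <> 0;
   symmetrically for a10. *)
Definition kkt_grad l (τ : Idx) : 'rV[R]_n :=
  match τ with
  | inl i => grad (h i) (x l)
  | inr (inl j) => grad (g j) (x l)
  | inr (inr (inl m)) => grad (F1 m) (x l) +
      (if a01 F1 F2 xbar m then F1 m (x l) / F2 m (x l) else 0) *: grad (F2 m) (x l)
  | inr (inr (inr m)) => grad (F2 m) (x l) +
      (if a10 F1 F2 xbar m then F2 m (x l) / F1 m (x l) else 0) *: grad (F1 m) (x l)
  end.

Definition kkt_coef l (τ : Idx) : R :=
  match τ with
  | inl i => lam l i
  | inr (inl j) => mu l j
  | inr (inr (inl m)) => nu l m * F2 m (x l)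
  | inr (inr (inr m)) => nu l m * F1 m (x l) + ga l m
  end.

Lemma free_active_grad : LICQ h g F1 F2 xbar -> free (map active_grad active).
Proof. by move=> licq; rewrite /active !map_cat -!(map_comp active_grad). Qed.

Lemma cvg_kkt_grad τ : kkt_grad ^~ τ @ \oo --> active_grad τ.
Proof.
have grad_x u : C1 u -> (fun l => grad u (x l)) @ \oo --> grad u xbar.
  by move=> Cu; exact: C1_cvg_grad Cu x_cvg.
have ratio_x u w : C1 u -> C1 w -> u xbar = 0 -> w xbar != 0 ->
    (fun l => u (x l) / w (x l)) @ \oo --> 0.
  move=> Cu Cw u0 w0; apply: cvg_div0 (C1_cvg Cw x_cvg) w0.
  by rewrite -u0; exact: C1_cvg Cu x_cvg.
rewrite /kkt_grad /active_grad.
case: τ => [i|[j|[m|m]]]; [exact: grad_x (Ch i) | exact: grad_x (Cg j) | |].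
- rewrite -[X in _ --> X]addr0 -(scale0r (grad (F2 m) xbar)).
  apply: cvgD (grad_x _ (CF1 m)) (cvgZ _ (grad_x _ (CF2 m))).
  have [/andP[/eqP F10 F2pos]|_] := boolP (a01 F1 F2 xbar m); last exact: cvg_cst.
  exact: ratio_x (CF1 m) (CF2 m) F10 (lt0r_neq0 F2pos).
- rewrite -[X in _ --> X]addr0 -(scale0r (grad (F1 m) xbar)).
  apply: cvgD (grad_x _ (CF2 m)) (cvgZ _ (grad_x _ (CF1 m))).
  have [/andP[F1n0 /eqP F20]|_] := boolP (a10 F1 F2 xbar m); last exact: cvg_cst.
  exact: ratio_x (CF2 m) (CF1 m) F20 F1n0.
Qed.

Lemma near_x_neq0 r (u : 'I_r -> 'rV[R]_n -> R) (P : pred 'I_r) :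
  (forall m, C1 (u m)) -> (forall m, P m -> u m xbar != 0) ->
  \forall l \near \oo, forall m, P m -> u m (x l) != 0.
Proof.
move=> Cu Pu; apply: filter_forall => m.
have [Pm|/negP nPm] := boolP (P m); last by apply: nearW.
by apply: filterS (cvgr_neq0 _ (C1_cvg (Cu m) x_cvg) (Pu m Pm)) => l.
Qed.

Lemma kkt_product_term l m :
  (a01 F1 F2 xbar m -> F2 m (x l) != 0) -> (a10 F1 F2 xbar m -> F1 m (x l) != 0) ->
  al l m *: grad (fun y => t l - F1 m y * F2 m y) (x l)
  + be l m *: grad (fun y => F1 m y * F2 m y + t l) (x l) + ga l m *: grad (F2 m) (x l)
  = (if a01 F1 F2 xbar m || a00 F1 F2 xbar m
     then kkt_coef l (inr (inr (inl m))) *: kkt_grad l (inr (inr (inl m))) else 0)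
  + (if a10 F1 F2 xbar m || a00 F1 F2 xbar m
     then kkt_coef l (inr (inr (inr m))) *: kkt_grad l (inr (inr (inr m))) else 0).
Proof.
move=> F2l F1l.
rewrite grad_cst_subM ?grad_M_addcst // scale_product_grads -/(nu l m) /kkt_coef /kkt_grad.
have ga_F2 : ga l m * F2 m (x l) = 0 by have [_ [_ [_ [/(_ m)[]]]]] := mult l.
have [F12 F2ge] := feas_xbar.2.2 m.
have [F10|F1n0] := eqVneq (F1 m xbar) 0.
  have [F20|F2pos] := eqVneq (F2 m xbar) 0.
    by rewrite /a01 /a10 /a00 F10 F20 eqxx ltxx /= !scale0r !addr0.
  have F2gt : 0 < F2 m xbar by rewrite lt_def F2pos F2ge.
  rewrite /a01 /a10 /a00 F10 (negbTE F2pos) F2gt eqxx /= addr0.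
  by apply: combination_on_first ga_F2; apply: F2l; rewrite /a01 F10 eqxx F2gt.
have F20 : F2 m xbar = 0 by move/eqP: F12; rewrite mulf_eq0 (negbTE F1n0) => /eqP.
rewrite /a01 /a10 /a00 (negbTE F1n0) F20 eqxx /= add0r.
by apply: combination_on_second ga_F2; apply: F1l; rewrite /a10 F1n0 F20 eqxx.
Qed.

Lemma grad_f_kkt :
  \forall l \near \oo, grad f (x l) = \sum_(τ <- active) kkt_coef l τ *: kkt_grad l τ.
Proof.
near=> l.
have g_neq0 : forall j, ~~ J0 g xbar j -> g j (x l) != 0.
  by near: l; exact: near_x_neq0 _ g _ Cg (fun j nj => nj).
have F2_neq0 : forall m, a01 F1 F2 xbar m -> F2 m (x l) != 0.
  by near: l; apply: near_x_neq0 _ F2 _ CF2 _ => m /andP[_ /lt0r_neq0].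
have F1_neq0 : forall m, a10 F1 F2 xbar m -> F1 m (x l) != 0.
  by near: l; apply: near_x_neq0 _ F1 _ CF1 _ => m /andP[].
have [mu_l [_ [_ [_ ->]]]] := mult l.
rewrite /active !big_cat !big_map !big_filter /= !big_enum_cond /=.
rewrite -!addrA; congr (_ + _); congr (_ + _).
  rewrite (bigID (J0 g xbar)) /= [X in _ + X]big1 ?addr0 // => j /g_neq0 gj.
  have [_ /eqP] := mu_l j.
  by rewrite mulf_eq0 (negbTE gj) orbF => /eqP ->; rewrite scale0r.
rewrite [in RHS]big_mkcond [X in _ = _ + X]big_mkcond -big_split /=.
by apply: eq_bigr => m _; apply: kkt_product_term; [exact: F2_neq0 | exact: F1_neq0].
Unshelve. all: by end_near.
Qed.

Lemma sum_active_grad (w : Idx -> R) :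
  \sum_(τ <- active) w τ *: active_grad τ =
    \sum_(i < p) w (inl i) *: grad (h i) xbar
  + \sum_(j < q | J0 g xbar j) w (inr (inl j)) *: grad (g j) xbar
  + \sum_(m < k | a01 F1 F2 xbar m) w (inr (inr (inl m))) *: grad (F1 m) xbar
  + \sum_(m < k | a10 F1 F2 xbar m) w (inr (inr (inr m))) *: grad (F2 m) xbar
  + \sum_(m < k | a00 F1 F2 xbar m)
      (w (inr (inr (inl m))) *: grad (F1 m) xbar + w (inr (inr (inr m))) *: grad (F2 m) xbar).
Proof.
rewrite /active !big_cat !big_map !big_filter /= !big_enum_cond /=.
rewrite -!addrA; congr (_ + _); congr (_ + _).
rewrite [X in X + _ = _]big_mkcond [X in _ + X = _]big_mkcond [X in _ = X + _]big_mkcond.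
rewrite [X in _ = _ + (X + _)]big_mkcond [X in _ = _ + (_ + X)]big_mkcond.
rewrite -[X in _ = _ + X]big_split -[X in _ = X]big_split -[X in X = _]big_split /=.
apply: eq_bigr => m _; rewrite /a01 /a10 /a00.
have [F10|F1n0] /= := eqVneq (F1 m xbar) 0; have [F20|F2n0] /= := eqVneq (F2 m xbar) 0;
  rewrite ?F20 ?ltxx /= ?addr0 ?add0r //.
by case: (0 < F2 m xbar); rewrite ?addr0 ?add0r.
Qed.

Lemma kkt_coef_F2_nonpos l m :
  kkt_coef l (inr (inr (inl m))) != 0 -> kkt_coef l (inr (inr (inr m))) <= 0.
Proof.
rewrite /kkt_coef mulf_eq0 negb_or => /andP[_ F2l0].
have [_ [al_m [be_m [ga_m _]]]] := mult l.
have [al0 alE] := al_m m; have [be0 beE] := be_m m; have [_ gaE] := ga_m m.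
have [_ [_ /(_ m)[_ [_ F2ge]]]] := feas_x l.
have F2pos : 0 < F2 m (x l) by rewrite lt_def F2l0 F2ge.
have -> : ga l m = 0 by move/eqP: gaE; rewrite mulf_eq0 (negbTE F2l0) orbF => /eqP.
have := complementarity_sign _ _ _ _ (t_gt0 l) al0 be0 alE beE.
by rewrite addr0 mulrA pmulr_lle0.
Qed.

Lemma KKT_limit_Tstationary : LICQ h g F1 F2 xbar -> Tstationary f h g F1 F2 xbar.
Proof.
move=> licq; pose w τ := lim (kkt_coef ^~ τ @ \oo).
have [coef_cvg grad_fE] := cvg_free_combination (free_active_grad licq) cvg_kkt_grad
  (C1_cvg_grad Cf x_cvg) grad_f_kkt.
split=> //; exists (fun i => w (inl i)), (fun j => w (inr (inl j))),
  (fun m => w (inr (inr (inl m)))), (fun m => w (inr (inr (inr m)))),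
  (fun m => w (inr (inr (inl m)))), (fun m => w (inr (inr (inr m)))).
split; first by rewrite grad_fE sum_active_grad.
split=> [j Jj|m m00].
  apply: (closed_cvg _ (@closed_ge R 0) _ _ (coef_cvg _ _)).
    by apply: nearW => l; exact: ((mult l).1 j).1.
  by rewrite !mem_cat map_f ?orbT // mem_filter Jj mem_enum.
have [->|r1] := eqVneq (w (inr (inr (inl m)))) 0; [by left | right].
have mem1 : inr (inr (inl m)) \in active.
  by rewrite !mem_cat map_f ?orbT // mem_filter m00 orbT mem_enum.
have mem2 : inr (inr (inr m)) \in active.
  by rewrite !mem_cat map_f ?orbT // mem_filter m00 orbT mem_enum.
apply: (closed_cvg _ (@closed_le R 0) _ _ (coef_cvg _ mem2)).
by apply: filterS (cvgr_neq0 _ (coef_cvg _ mem1) r1) => l; exact: kkt_coef_F2_nonpos.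
Qed.

End KKT_limit.

Arguments KKT_limit_Tstationary {R n p q k f h g F1 F2} _ _ _ _ _
  {t x xbar lam mu al be ga}.

Theorem mainTheorem10 (R : realType) (n p q k : nat)
  (f : 'rV[R]_n -> R) (h : 'I_p -> 'rV[R]_n -> R)
  (g : 'I_q -> 'rV[R]_n -> R) (F1 F2 : 'I_k -> 'rV[R]_n -> R)
  (Cf : C2 f) (Ch : forall i, C2 (h i)) (Cg : forall j, C2 (g j))
  (CF1 : forall m, C2 (F1 m)) (CF2 : forall m, C2 (F2 m))
  (t : nat -> R) (x : nat -> 'rV[R]_n) (xbar : 'rV[R]_n) :
  (forall l, 0 < t l) ->
  t @ \oo --> (0 : R) ->
  (forall l, KKT_t f h g F1 F2 (t l) (x l)) ->
  x @ \oo --> xbar ->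
  feasM h g F1 F2 xbar ->
  LICQ h g F1 F2 xbar ->
  Tstationary f h g F1 F2 xbar.
Proof.
move=> t_gt0 _ KKT x_cvg feas licq.
have /choice[lam /choice[mu /choice[al /choice[be /choice[ga mult]]]]] :=
  fun l => (KKT l).2.
exact: (KKT_limit_Tstationary Cf.1 (fun i => (Ch i).1) (fun j => (Cg j).1)
  (fun m => (CF1 m).1) (fun m => (CF2 m).1) t_gt0 (fun l => (KKT l).1) mult
  x_cvg feas licq).
Qed.
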